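(* For Variant 1 of the generalized one-way trading problem under Assumption A with $0<L<U$, the optimal competitive ratio (smallest competitive ratio achievable by an online algorithm) is the solution $\alpha^*>1$ of $\alpha^*=\ln\frac{U-L}{\alpha^*L-L}$.
   Context: Variant 1: a single knapsack of capacity $C$; items $n=1,\dots,N$ arrive one at a time; item $n$ has size $D_n>0$ and value function $g_n:[0,D_n]\to\mathbb R_{\ge0}$, revealed on arrival. Any remaining capacity at the end is filled at the lowest marginal value $L$: the offline problem is $\max\sum_n g_n(y_n)+(C-\sum_n y_n)L$ s.t. $\sum_n y_n\le C$, $0\le y_n\le D_n$, and an online algorithm choosing $y_1,\dots,y_N$ earns $\sum_n g_n(y_n)+(C-\sum_n y_n)L$. Assumption A: each $g_n$ is non-decreasing, differentiable, concave, $g_n(0)=0$, $L\le g_n'\le U$, with $C,L,U$ known. An online algorithm irrevocably chooses $y_n$ on arrival using only items $1,\dots,n$ and $C,L,U$; competitive ratio is $\sup_{\mathcal I}\mathrm{OPT}/\mathrm{ALG}$ over instances satisfying Assumption A. *)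

From Stdlib Require Import Reals Lra List.
Import ListNotations.
Open Scope R_scope.

(** An item: its size D_n and its value function g_n (only its values on
    [0, D_n] are ever used). *)
Definition item := (R * (R -> R))%type.

Definition instance := list item.

Definition Rsum (l : list R) : R := fold_right Rplus 0 l.

Definition deriv_within (g : R -> R) (a b x l : R) : Prop :=
  forall eps, 0 < eps -> exists delta, 0 < delta /\
    forall y, a <= y <= b -> y <> x -> Rabs (y - x) < delta ->
      Rabs ((g y - g x) / (y - x) - l) < eps.

Definition assumptionA_item (L U : R) (it : item) : Prop :=
  let (D, g) := it in
  0 < D /\
  g 0 = 0 /\
  (forall x y, 0 <= x -> x <= y -> y <= D -> g x <= g y) /\
  (forall x y t, 0 <= x <= D -> 0 <= y <= D -> 0 <= t <= 1 ->
      t * g x + (1 - t) * g y <= g (t * x + (1 - t) * y)) /\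
  (forall x, 0 <= x <= D ->
      exists l, deriv_within g 0 D x l /\ L <= l <= U).

Definition assumptionA (L U : R) (I : instance) : Prop :=
  Forall (assumptionA_item L U) I.

Definition feasible (C : R) (I : instance) (y : list R) : Prop :=
  length y = length I /\
  Forall2 (fun (it : item) yn => 0 <= yn <= fst it) I y /\
  Rsum y <= C.

Definition payoff (C L : R) (I : instance) (y : list R) : R :=
  Rsum (map (fun p : item * R => snd (fst p) (snd p)) (combine I y))
  + (C - Rsum y) * L.

(** A deterministic online algorithm maps the history of revealed items
    (items 1..n, the last one being the current one) to the decision y_n. *)
Definition online_alg := instance -> R.

Definition decisions (A : online_alg) (I : instance) : list R :=
  map (fun n => A (firstn (S n) I)) (seq 0 (length I)).

Definition valid_alg (C L U : R) (A : online_alg) : Prop :=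
  forall I, assumptionA L U I -> feasible C I (decisions A I).

(** A is r-competitive: sup_I OPT(I)/ALG(I) <= r, i.e. for every instance
    and every feasible offline solution y, payoff(y) <= r * ALG(I). *)
Definition competitive (C L U : R) (A : online_alg) (r : R) : Prop :=
  forall I, assumptionA L U I ->
    forall y, feasible C I y ->
      payoff C L I y <= r * payoff C L I (decisions A I).

Definition optimal_ratio (C L U r : R) : Prop :=
  (exists A, valid_alg C L U A /\ competitive C L U A r) /\
  (forall A r', valid_alg C L U A -> competitive C L U A r' -> r <= r').

From Stdlib Require Import Reals Lra Lia List ClassicalEpsilon.
Import ListNotations.
Open Scope R_scope.

(* The adversary offers copies of a linear item of size [C] whose unit price
   climbs geometrically from [alpha L] to [U].  Against the offline solution that spends the
   whole capacity on the latest copy, a ratio [r <= alpha] forces the online algorithm to keep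
   buying at every step; summing this discrete differential inequality shows that the capacity
   [C] suffices only if [r >= m (1 - e^(-alpha/m))] for every [m], hence [r >= alpha].

   Let [psi w = (alpha - 1) L e^(alpha w / C)] and [Psi] be its antiderivative.
   The algorithm picks [y_n] maximizing the pseudo-utility [g_n y - L y - Psi (w + y)], [w] being
   the load so far.  Concavity makes [psi] of the load a supergradient of [g_n - L] at each
   choice, so any offline solution earns at most the online excess value minus [Psi (W)] plus
   [C psi (W)] at the final load [W]; the equation for [alpha] says exactly [psi C = U - L],
   which makes the capacity limit harmless, and [alpha Psi W = C psi W - C (alpha - 1) L]
   turns this into [OPT <= alpha ALG]. *)

Lemma exp_le_compat (x y : R) : x <= y -> exp x <= exp y.
Proof. intros [hlt | ->]; [left; now apply exp_increasing | right; reflexivity]. Qed.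

Lemma ln_equation_iff (L U alpha : R) : 0 < L -> L < U -> 1 < alpha ->
  alpha = ln ((U - L) / (alpha * L - L)) <-> exp alpha = (U - L) / ((alpha - 1) * L).
Proof.
  intros hL hLU ha.
  replace (alpha * L - L) with ((alpha - 1) * L) by ring.
  assert (hpos : 0 < (U - L) / ((alpha - 1) * L)) by (apply Rdiv_lt_0_compat; nra).
  split; intros E.
  - rewrite E at 1. now apply exp_ln.
  - now rewrite <- E, ln_exp.
Qed.

Lemma exists_exp_root (L U : R) : 0 < L -> L < U ->
  exists alpha, 1 < alpha /\ exp alpha = (U - L) / ((alpha - 1) * L).
Proof.
  intros hL hLU.
  set (c := (U - L) / L).
  assert (hc : 0 < c) by (unfold c; apply Rdiv_lt_0_compat; lra).
  assert (hcont : continuity (fun x => x - 1 - c * exp (- x))) by reg.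
  assert (hlo : 1 - 1 - c * exp (- 1) < 0).
  { pose proof (Rmult_lt_0_compat _ _ hc (exp_pos (- 1))). lra. }
  assert (hhi : 0 < 1 + c - 1 - c * exp (- (1 + c))).
  { assert (he : exp (- (1 + c)) < exp 0) by (apply exp_increasing; lra).
    rewrite exp_0 in he. nra. }
  destruct (IVT _ 1 (1 + c) hcont ltac:(lra) hlo hhi) as [z [_ hz]].
  assert (hz1 : z - 1 = c * exp (- z)) by lra.
  pose proof (exp_pos (- z)).
  exists z; split; [nra |].
  rewrite hz1, exp_Ropp. unfold c. field.
  pose proof (exp_pos z). repeat split; lra.
Qed.

Lemma Rsum_app (l1 l2 : list R) : Rsum (l1 ++ l2) = Rsum l1 + Rsum l2.
Proof. induction l1 as [| a l1 IH]; simpl; [ring | rewrite IH; ring]. Qed.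

Lemma Rsum_map_seq (f : nat -> R) (k : nat) :
  Rsum (map f (seq 0 (S k))) = sum_f_R0 f k.
Proof.
  induction k as [| k IH]; [simpl; ring |].
  rewrite seq_S, map_app, Rsum_app, IH. simpl. ring.
Qed.

Lemma sum_f_R0_last (f : nat -> R) (k : nat) :
  (forall j, (j < k)%nat -> f j = 0) -> sum_f_R0 f k = f k.
Proof.
  intros hf. destruct k as [| k]; [reflexivity |].
  rewrite tech5, sum_eq_R0; [ring |].
  intros j hj. apply hf. lia.
Qed.

Lemma firstn_seq (n s l : nat) : firstn n (seq s l) = seq s (Nat.min n l).
Proof.
  revert s l. induction n as [| n IH]; intros s [| l]; simpl; try reflexivity.
  now rewrite IH.
Qed.

Lemma combine_map_diag {A B C : Type} (f : A -> B) (g : A -> C) (l : list A) :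
  combine (map f l) (map g l) = map (fun j => (f j, g j)) l.
Proof. induction l as [| a l IH]; simpl; [reflexivity | now rewrite IH]. Qed.

Lemma Forall2_map_diag {A B C : Type} (P : B -> C -> Prop) (f : A -> B) (g : A -> C) (l : list A) :
  (forall j, In j l -> P (f j) (g j)) -> Forall2 P (map f l) (map g l).
Proof.
  induction l as [| a l IH]; intros hfg; simpl; constructor.
  - apply hfg. now left.
  - apply IH. intros j hj. apply hfg. now right.
Qed.

(** * Lower bound: a ramp of linear items *)

Definition lin_item (C p : R) : item := (C, fun y => p * y).

Lemma lin_item_assumptionA (C L U p : R) :
  0 < C -> 0 <= L <= p -> p <= U -> assumptionA_item L U (lin_item C p).
Proof.
  intros hC hp hpU. unfold lin_item, assumptionA_item.
  repeat split; try lra.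
  - intros x y hx hxy _. nra.
  - intros. right; ring.
  - intros x _. exists p. split; [| lra].
    intros eps heps. exists 1. split; [lra |]. intros y _ hyx _.
    replace ((p * y - p * x) / (y - x) - p) with 0 by (field; lra).
    rewrite Rabs_R0; lra.
Qed.

Definition ramp (C : R) (p : nat -> R) (k : nat) : instance :=
  map (fun j => lin_item C (p j)) (seq 0 (S k)).

Lemma ramp_assumptionA (C L U : R) (p : nat -> R) (k : nat) :
  0 < C -> 0 <= L -> (forall j, (j <= k)%nat -> L <= p j <= U) ->
  assumptionA L U (ramp C p k).
Proof.
  intros hC hL hp. apply Forall_forall. intros it hit.
  apply in_map_iff in hit as [j [<- hj]]. apply in_seq in hj.
  destruct (hp j ltac:(lia)). apply lin_item_assumptionA; lra.
Qed.

Lemma decisions_ramp (A : online_alg) (C : R) (p : nat -> R) (k : nat) :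
  decisions A (ramp C p k) = map (fun j => A (ramp C p j)) (seq 0 (S k)).
Proof.
  unfold decisions. replace (length (ramp C p k)) with (S k)
    by (unfold ramp; now rewrite length_map, length_seq).
  apply map_ext_in. intros n hn. apply in_seq in hn.
  unfold ramp. rewrite firstn_map, firstn_seq. do 4 f_equal. lia.
Qed.

Lemma payoff_ramp (C L : R) (p y : nat -> R) (k : nat) :
  payoff C L (ramp C p k) (map y (seq 0 (S k))) =
  sum_f_R0 (fun j => p j * y j) k + (C - sum_f_R0 y k) * L.
Proof.
  unfold payoff, ramp. rewrite combine_map_diag, map_map, !Rsum_map_seq.
  reflexivity.
Qed.

Section Adversary.

Variables (C L U r : R) (A : online_alg) (p : nat -> R) (m : nat).
Hypotheses (hC : 0 < C) (hL : 0 <= L) (hvalid : valid_alg C L U A)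
  (hcomp : competitive C L U A r) (hp : forall j, (j <= m)%nat -> L <= p j <= U).

Lemma ramp_budget : sum_f_R0 (fun j => A (ramp C p j)) m <= C.
Proof.
  destruct (hvalid _ (ramp_assumptionA C L U p m hC hL hp)) as [_ [_ hsum]].
  now rewrite decisions_ramp, Rsum_map_seq in hsum.
Qed.

(* Offline, the whole capacity goes to the last item [k]. *)
Lemma ramp_competitive (k : nat) : (k <= m)%nat ->
  p k * C <= r * (sum_f_R0 (fun j => p j * A (ramp C p j)) k
                  + (C - sum_f_R0 (fun j => A (ramp C p j)) k) * L).
Proof.
  intros hk.
  set (y := fun j => if Nat.eqb j k then C else 0).
  assert (hy : forall f : nat -> R, sum_f_R0 (fun j => f j * y j) k = f k * C).
  { intros f. rewrite sum_f_R0_last; unfold y.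
    - now rewrite Nat.eqb_refl.
    - intros j hj. destruct (Nat.eqb_spec j k); [lia | ring]. }
  assert (hyC : sum_f_R0 y k = C).
  { rewrite (sum_eq y (fun j => 1 * y j)) by (intros; ring). now rewrite hy, Rmult_1_l. }
  assert (hfeas : feasible C (ramp C p k) (map y (seq 0 (S k)))).
  { split; [unfold ramp; now rewrite !length_map |]. split.
    - apply Forall2_map_diag. intros j _. unfold y; simpl.
      destruct (Nat.eqb j k); lra.
    - rewrite Rsum_map_seq. lra. }
  assert (hA : assumptionA L U (ramp C p k))
    by (apply ramp_assumptionA; auto; intros j hj; apply hp; lia).
  pose proof (hcomp _ hA _ hfeas) as hopt.
  rewrite decisions_ramp, !payoff_ramp, hy, hyC in hopt. lra.
Qed.

End Adversary.

Lemma competitive_ratio_ge_1 (C L U r : R) (A : online_alg) :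
  0 < C -> 0 < L -> L <= U -> competitive C L U A r -> 1 <= r.
Proof.
  intros hC hL hLU hcomp.
  pose proof (ramp_competitive C L U r A (fun _ => L) 0 hC ltac:(lra) hcomp
    ltac:(intros; lra) 0 (Nat.le_refl _)) as hopt.
  simpl in hopt. apply (Rmult_le_reg_r (L * C)); [nra |]. lra.
Qed.

(* With
   [S_k = sum_(j<=k) q_j x_j] and [X_k = sum_(j<=k) x_j], the potential
   [r S_k / q_k + C (k (1 - 1/rho) - 1 + a / q_k) - r X_k] starts at [0] and each step adds
   [- (1 - 1/rho) (r S_k - C (q_k - a)) / q_k <= 0]. *)
Lemma geometric_ramp_bound (C r a rho : R) (q x : nat -> R) (m : nat) :
  0 < C -> 0 <= r -> 0 < a -> 1 <= rho -> q 0%nat = a -> (forall j, q (S j) = rho * q j) ->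
  sum_f_R0 x m <= C ->
  (forall k, (k <= m)%nat -> C * (q k - a) <= r * sum_f_R0 (fun j => q j * x j) k) ->
  INR m * (1 - / rho) <= r.
Proof.
  intros hC hr ha hrho hq0 hqS hX hS.
  assert (hq : forall k, 0 < q k).
  { induction k as [| k IH]; [lra | rewrite hqS; nra]. }
  assert (hpotential : forall k, (k <= m)%nat ->
    r * sum_f_R0 (fun j => q j * x j) k / q k + C * (INR k * (1 - / rho) - 1 + a / q k)
      <= r * sum_f_R0 x k).
  { induction k as [| k IH]; intros hk.
    - simpl. rewrite hq0. right. field. lra.
    - specialize (IH ltac:(lia)). pose proof (hS k ltac:(lia)) as hSk.
      pose proof (hq k) as hqk.
      rewrite !tech5, S_INR, hqS.
      set (Sk := sum_f_R0 (fun j => q j * x j) k) in *.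
      set (T := r * Sk - C * (q k - a)).
      assert (hdrop : 0 <= T * (1 - / rho) / q k).
      { assert (/ rho <= 1) by (rewrite <- Rinv_1; apply Rinv_le_contravar; lra).
        apply Rmult_le_pos; [apply Rmult_le_pos; unfold T; lra |].
        left; now apply Rinv_0_lt_compat. }
      assert (E : r * (Sk + rho * q k * x (S k)) / (rho * q k)
                  + C * ((INR k + 1) * (1 - / rho) - 1 + a / (rho * q k))
                = r * Sk / q k + C * (INR k * (1 - / rho) - 1 + a / q k)
                  + r * x (S k) - T * (1 - / rho) / q k).
      { unfold T. field. lra. }
      rewrite E. lra. }
  pose proof (hpotential m (Nat.le_refl _)) as hm.
  assert (hlast : C * (1 - a / q m) <= r * sum_f_R0 (fun j => q j * x j) m / q m).
  { pose proof (hq m). pose proof (hS m (Nat.le_refl _)).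
    apply (Rmult_le_reg_r (q m)); [lra |].
    replace (C * (1 - a / q m) * q m) with (C * (q m - a)) by (field; lra).
    replace (r * sum_f_R0 (fun j => q j * x j) m / q m * q m)
      with (r * sum_f_R0 (fun j => q j * x j) m) by (field; lra).
    assumption. }
  assert (r * sum_f_R0 x m <= r * C) by (apply Rmult_le_compat_l; lra).
  apply (Rmult_le_reg_l C); [assumption |].
  replace (C * (INR m * (1 - / rho)))
    with (C * (INR m * (1 - / rho) - 1 + a / q m) + C * (1 - a / q m)) by ring.
  lra.
Qed.

Lemma frac_le_one_sub_inv_exp (x : R) : 0 <= x -> x / (1 + x) <= 1 - / exp x.
Proof.
  intros hx.
  assert (/ exp x <= / (1 + x)) by (apply Rinv_le_contravar; [lra | apply exp_ineq1_le]).
  replace (x / (1 + x)) with (1 - / (1 + x)) by (field; lra). lra.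
Qed.

Lemma le_of_forall_nat_frac (alpha r : R) : 0 < alpha ->
  (forall m, (0 < m)%nat -> INR m * alpha / (INR m + alpha) <= r) -> alpha <= r.
Proof.
  intros ha hfrac. destruct (Rle_or_lt alpha r) as [| hlt]; [assumption | exfalso].
  destruct (INR_unbounded (Rmax 0 (r * alpha / (alpha - r)))) as [n hn].
  pose proof (Rmax_l 0 (r * alpha / (alpha - r))).
  pose proof (Rmax_r 0 (r * alpha / (alpha - r))).
  assert (hn0 : (0 < n)%nat) by (apply INR_lt; simpl; lra).
  specialize (hfrac n hn0).
  assert (hm : INR n * alpha <= r * (INR n + alpha)).
  { apply (Rmult_le_compat_r (INR n + alpha)) in hfrac; [| lra].
    now replace (INR n * alpha / (INR n + alpha) * (INR n + alpha)) with (INR n * alpha)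
      in hfrac by (field; lra). }
  assert (r * alpha < INR n * (alpha - r)).
  { replace (r * alpha) with (r * alpha / (alpha - r) * (alpha - r)) by (field; lra).
    apply Rmult_lt_compat_r; lra. }
  lra.
Qed.

(* The adversary's prices [L + a e^(j alpha / m)], with [a = (alpha - 1) L], climb from
   [alpha L] to exactly [U]. *)
Lemma exp_ramp_bound (C L U alpha r : R) (A : online_alg) (m : nat) :
  0 < C -> 0 < L -> L < U -> 1 < alpha -> exp alpha = (U - L) / ((alpha - 1) * L) ->
  valid_alg C L U A -> competitive C L U A r -> r <= alpha -> (0 < m)%nat ->
  INR m * (1 - / exp (alpha / INR m)) <= r.
Proof.
  intros hC hL hLU ha hexp hvalid hcomp hra hm.
  set (a := (alpha - 1) * L).
  assert (hapos : 0 < a) by (unfold a; nra).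
  assert (hmpos : 0 < INR m) by (now apply lt_0_INR).
  set (q := fun j : nat => a * exp (INR j * alpha / INR m)).
  assert (hprice : forall j, (j <= m)%nat -> L <= L + q j <= U).
  { intros j hj. unfold q.
    assert (exp (INR j * alpha / INR m) <= exp alpha).
    { apply exp_le_compat. apply le_INR in hj.
      apply (Rmult_le_reg_r (INR m)); [lra |].
      replace (INR j * alpha / INR m * INR m) with (INR j * alpha) by (field; lra). nra. }
    assert (a * exp alpha = U - L) by (rewrite hexp; unfold a; field; nra).
    pose proof (exp_pos (INR j * alpha / INR m)). nra. }
  set (p := fun j => L + q j).
  set (x := fun j => A (ramp C p j)).
  pose proof (competitive_ratio_ge_1 C L U r A hC hL ltac:(lra) hcomp) as hr1.
  apply (geometric_ramp_bound C r a _ q x m hC ltac:(lra) hapos).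
  - left. rewrite <- exp_0. apply exp_increasing. apply Rdiv_lt_0_compat; lra.
  - unfold q. simpl. replace (0 * alpha / INR m) with 0 by (field; lra).
    rewrite exp_0. ring.
  - intros j. unfold q. rewrite S_INR.
    replace ((INR j + 1) * alpha / INR m) with (alpha / INR m + INR j * alpha / INR m)
      by (field; lra).
    rewrite exp_plus. ring.
  - exact (ramp_budget C L U A p m hC ltac:(lra) hvalid hprice).
  - intros k hk.
    pose proof (ramp_competitive C L U r A p m hC ltac:(lra) hcomp hprice k hk) as hopt.
    fold x in hopt. unfold p in hopt.
    rewrite (sum_eq (fun j => (L + q j) * x j) (fun j => x j * L + q j * x j))
      in hopt by (intros; ring).
    rewrite plus_sum, <- scal_sum in hopt.
    assert (C * ((r - 1) * L) <= C * a) by (apply Rmult_le_compat_l; unfold a; nra).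
    nra.
Qed.

Lemma lower_bound (C L U alpha r : R) (A : online_alg) :
  0 < C -> 0 < L -> L < U -> 1 < alpha -> exp alpha = (U - L) / ((alpha - 1) * L) ->
  valid_alg C L U A -> competitive C L U A r -> alpha <= r.
Proof.
  intros hC hL hLU ha hexp hvalid hcomp.
  destruct (Rle_or_lt alpha r) as [| hra]; [assumption |].
  apply le_of_forall_nat_frac; [lra |]. intros m hm.
  assert (hmpos : 0 < INR m) by (now apply lt_0_INR).
  pose proof (exp_ramp_bound C L U alpha r A m hC hL hLU ha hexp hvalid hcomp
    ltac:(lra) hm) as hramp.
  pose proof (frac_le_one_sub_inv_exp (alpha / INR m)
    ltac:(left; apply Rdiv_lt_0_compat; lra)) as hexp_m.
  replace (INR m * alpha / (INR m + alpha))
    with (INR m * (alpha / INR m / (1 + alpha / INR m))) by (field; lra).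
  apply (Rle_trans _ (INR m * (1 - / exp (alpha / INR m)))); [| assumption].
  apply Rmult_le_compat_l; lra.
Qed.

(** * Upper bound: maximizing a pseudo-utility *)

Lemma le_of_le_add_linear (A B E t1 : R) : 0 < t1 -> 0 <= E ->
  (forall t, 0 < t <= t1 -> A <= B + E * t) -> A <= B.
Proof.
  intros ht1 hE hlin. apply Rle_plus_epsilon. intros eps heps.
  set (t := Rmin t1 (eps / (E + 1))).
  assert (hpos : 0 < eps / (E + 1)) by (apply Rdiv_lt_0_compat; lra).
  assert (ht : 0 < t <= t1) by (split; [apply Rmin_glb_lt | apply Rmin_l]; lra).
  assert (E * t <= eps).
  { apply (Rle_trans _ ((E + 1) * (eps / (E + 1)))).
    - apply Rmult_le_compat; try lra. apply Rmin_r.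
    - right. field. lra. }
  specialize (hlin t ht). lra.
Qed.

Lemma exp_mul_one_sub_le_1 (x : R) : exp x * (1 - x) <= 1.
Proof.
  pose proof (exp_ineq1_le (- x)) as hneg. rewrite exp_Ropp in hneg.
  pose proof (exp_pos x).
  apply (Rmult_le_compat_l (exp x)) in hneg; [| lra].
  rewrite Rinv_r in hneg; lra.
Qed.

Lemma exp_le_quadratic (x : R) : 0 <= x <= / 2 -> exp x <= 1 + x * (1 + 2 * x).
Proof.
  intros hx. pose proof (exp_mul_one_sub_le_1 x).
  apply (Rmult_le_reg_r (1 - x)); [lra |].
  assert (0 <= x * x * (1 - 2 * x)) by (apply Rmult_le_pos; [nra | lra]).
  nra.
Qed.

Definition concave_on (D : R) (h : R -> R) : Prop :=
  forall x y t, 0 <= x <= D -> 0 <= y <= D -> 0 <= t <= 1 ->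
    t * h x + (1 - t) * h y <= h (t * x + (1 - t) * y).

Lemma concave_on_sub_linear (D L : R) (g : R -> R) :
  concave_on D g -> concave_on D (fun u => g u - L * u).
Proof. intros hg x y t hx hy ht. pose proof (hg x y t hx hy ht). nra. Qed.

Lemma concave_le_tangent (D x l z : R) (g : R -> R) :
  concave_on D g -> 0 <= x <= D -> 0 <= z <= D -> deriv_within g 0 D x l ->
  g z <= g x + l * (z - x).
Proof.
  intros hg hx hz hder.
  destruct (Req_dec z x) as [-> | hzx]; [lra |].
  set (d := z - x).
  assert (hd : 0 < Rabs d) by (apply Rabs_pos_lt; unfold d; intro heq; apply hzx; lra).
  apply Rle_plus_epsilon. intros eps heps.
  destruct (hder (eps / Rabs d)) as [delta [hdelta hclose]];
    [now apply Rdiv_lt_0_compat |].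
  set (t := Rmin 1 (delta / (2 * Rabs d))).
  assert (ht : 0 < t <= 1).
  { split; [apply Rmin_glb_lt; [lra | apply Rdiv_lt_0_compat; lra] | apply Rmin_l]. }
  assert (htd : t * Rabs d < delta).
  { apply (Rle_lt_trans _ (delta / (2 * Rabs d) * Rabs d)).
    - apply Rmult_le_compat_r; [lra | apply Rmin_r].
    - replace (delta / (2 * Rabs d) * Rabs d) with (delta / 2) by (field; lra). lra. }
  set (u := t * z + (1 - t) * x).
  assert (hu : u - x = t * d) by (unfold u, d; ring).
  assert (hdist : Rabs (u - x) = t * Rabs d)
    by (rewrite hu, Rabs_mult, (Rabs_right t); lra).
  assert (hux : u <> x) by (intro heq; rewrite heq, Rminus_diag, Rabs_R0 in hdist; nra).
  assert (hur : 0 <= u <= D) by (unfold u; split; nra).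
  specialize (hclose u hur hux ltac:(lra)).
  set (Q := (g u - g x) / (u - x)) in hclose.
  assert (hQ : g u - g x = Q * (u - x)) by (unfold Q; field; lra).
  assert (herr : (Q - l) * (u - x) <= t * eps).
  { apply (Rle_trans _ (Rabs ((Q - l) * (u - x)))); [apply Rle_abs |].
    rewrite Rabs_mult, hdist.
    apply (Rle_trans _ (eps / Rabs d * (t * Rabs d))).
    - apply Rmult_le_compat_r; [nra | lra].
    - right. field. lra. }
  pose proof (hg z x t hz hx ltac:(lra)) as hconc. fold u in hconc.
  apply (Rmult_le_reg_l t); [lra |].
  rewrite hu in hQ, herr. unfold d in *. nra.
Qed.

Section PseudoUtility.

Variables K k : R.
Hypotheses (hK : 0 < K) (hk : 0 < k).

(* [psi] is the marginal price (above [L]) at which the algorithm stops buying once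
   [w] units are committed; [Psi] is its antiderivative with [Psi 0 = 0]. *)
Definition psi (w : R) : R := K * exp (k * w).
Definition Psi (w : R) : R := K / k * (exp (k * w) - 1).

Lemma psi_pos (w : R) : 0 < psi w.
Proof. apply Rmult_lt_0_compat; [assumption | apply exp_pos]. Qed.

Lemma psi_le (v w : R) : v <= w -> psi v <= psi w.
Proof. intros hvw. apply Rmult_le_compat_l; [lra |]. apply exp_le_compat. nra. Qed.

Lemma Psi_0 : Psi 0 = 0.
Proof. unfold Psi. rewrite Rmult_0_r, exp_0. ring. Qed.

Lemma psi_add (v s : R) : psi (v + s) = psi v * exp (k * s).
Proof. unfold psi. rewrite Rmult_plus_distr_l, exp_plus. ring. Qed.

Lemma Psi_diff (v s : R) : Psi (v + s) - Psi v = psi v * (exp (k * s) - 1) / k.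
Proof. unfold Psi, psi. rewrite Rmult_plus_distr_l, exp_plus. field. lra. Qed.

Lemma Psi_diff_ge (v s : R) : psi v * s <= Psi (v + s) - Psi v.
Proof.
  rewrite Psi_diff. pose proof (exp_ineq1_le (k * s)). pose proof (psi_pos v).
  apply (Rmult_le_reg_r k); [assumption |].
  replace (psi v * (exp (k * s) - 1) / k * k) with (psi v * (exp (k * s) - 1))
    by (field; lra).
  nra.
Qed.

Lemma Psi_diff_le (v s : R) : Psi (v + s) - Psi v <= psi (v + s) * s.
Proof.
  rewrite Psi_diff, psi_add.
  pose proof (exp_mul_one_sub_le_1 (k * s)). pose proof (psi_pos v).
  apply (Rmult_le_reg_r k); [assumption |].
  replace (psi v * (exp (k * s) - 1) / k * k) with (psi v * (exp (k * s) - 1))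
    by (field; lra).
  nra.
Qed.

Lemma Psi_diff_le_quadratic (v s : R) : 0 <= k * s <= / 2 ->
  Psi (v + s) - Psi v <= psi v * s * (1 + 2 * k * s).
Proof.
  intros hs. rewrite Psi_diff. pose proof (exp_le_quadratic (k * s) hs).
  pose proof (psi_pos v).
  apply (Rmult_le_reg_r k); [assumption |].
  replace (psi v * (exp (k * s) - 1) / k * k) with (psi v * (exp (k * s) - 1))
    by (field; lra).
  nra.
Qed.

Lemma psi_sub_ge (v s : R) : psi v * (1 - k * s) <= psi (v - s).
Proof.
  replace (v - s) with (v + - s) by ring. rewrite psi_add.
  pose proof (exp_ineq1_le (k * - s)). pose proof (psi_pos v).
  apply Rmult_le_compat_l; lra.
Qed.

Lemma max_pseudo_utility_left (D b w y z : R) (h : R -> R) :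
  concave_on D h -> 0 <= z < y -> y <= b -> b <= D ->
  (forall u, 0 <= u <= b -> h u - Psi (w + u) <= h y - Psi (w + y)) ->
  h z - psi (w + y) * z <= h y - psi (w + y) * y.
Proof.
  intros hh hz hy hb hmax.
  set (P := psi (w + y)). set (d := y - z).
  assert (hP : 0 < P) by apply psi_pos.
  assert (hd : 0 < d) by (unfold d; lra).
  enough (P * d <= h y - h z) by (unfold d in *; lra).
  apply (le_of_le_add_linear _ _ (P * k * d) d hd).
  { assert (0 <= P * k) by nra. nra. }
  intros s hs.
  set (t := s / d).
  assert (ht : 0 < t <= 1).
  { split; [apply Rdiv_lt_0_compat; lra |].
    apply (Rmult_le_reg_r d); [lra |]. unfold t.
    replace (s / d * d) with s by (field; lra). lra. }
  assert (hconc : t * h z + (1 - t) * h y <= h (y - s)).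
  { replace (y - s) with (t * z + (1 - t) * y) by (unfold t, d; field; lra).
    apply hh; lra. }
  pose proof (hmax (y - s) ltac:(unfold d in *; lra)) as hm.
  pose proof (Psi_diff_ge (w + (y - s)) s) as hPsi.
  replace (w + (y - s) + s) with (w + y) in hPsi by ring.
  pose proof (psi_sub_ge (w + y) s) as hpsi.
  replace (w + y - s) with (w + (y - s)) in hpsi by ring.
  fold P in hpsi.
  assert (P * (1 - k * s) * s <= psi (w + (y - s)) * s)
    by (apply Rmult_le_compat_r; lra).
  apply (Rmult_le_reg_l t); [lra |].
  replace (t * (P * d)) with (P * s) by (unfold t; field; lra).
  replace (t * (h y - h z + P * k * d * s)) with (t * (h y - h z) + P * k * s * s)
    by (unfold t; field; lra).
  nra.
Qed.

Lemma max_pseudo_utility_right (D b w y z : R) (h : R -> R) :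
  concave_on D h -> 0 <= y < b -> y < z <= D -> b <= D ->
  (forall u, 0 <= u <= b -> h u - Psi (w + u) <= h y - Psi (w + y)) ->
  h z - psi (w + y) * z <= h y - psi (w + y) * y.
Proof.
  intros hh hy hz hb hmax.
  set (P := psi (w + y)). set (d := z - y).
  assert (hP : 0 < P) by apply psi_pos.
  assert (hd : 0 < d) by (unfold d; lra).
  enough (h z - h y <= P * d) by (unfold d in *; lra).
  (* step lengths [s] that stay in [[y, b]] and are small enough for [Psi_diff_le_quadratic] *)
  set (s1 := Rmin d (Rmin (b - y) (/ (2 * k)))).
  assert (hs1 : 0 < s1).
  { repeat apply Rmin_glb_lt; try lra. apply Rinv_0_lt_compat; lra. }
  apply (le_of_le_add_linear _ _ (2 * P * k * d) s1 hs1).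
  { assert (0 <= P * k) by nra. nra. }
  intros s hs.
  assert (hsd : s <= d) by (apply (Rle_trans _ s1); [lra | apply Rmin_l]).
  assert (hsb : s <= b - y).
  { apply (Rle_trans _ s1); [lra |]. eapply Rle_trans; [apply Rmin_r | apply Rmin_l]. }
  assert (hks : k * s <= / 2).
  { assert (hs2 : s <= / (2 * k)).
    { apply (Rle_trans _ s1); [lra |]. eapply Rle_trans; [apply Rmin_r | apply Rmin_r]. }
    apply (Rmult_le_compat_l k) in hs2; [| lra].
    now replace (k * / (2 * k)) with (/ 2) in hs2 by (field; lra). }
  set (t := s / d).
  assert (ht : 0 < t <= 1).
  { split; [apply Rdiv_lt_0_compat; lra |].
    apply (Rmult_le_reg_r d); [lra |]. unfold t.
    replace (s / d * d) with s by (field; lra). lra. }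
  assert (hconc : t * h z + (1 - t) * h y <= h (y + s)).
  { replace (y + s) with (t * z + (1 - t) * y) by (unfold t, d; field; lra).
    apply hh; lra. }
  pose proof (hmax (y + s) ltac:(lra)) as hm.
  pose proof (Psi_diff_le_quadratic (w + y) s ltac:(nra)) as hPsi.
  replace (w + y + s) with (w + (y + s)) in hPsi by ring.
  fold P in hPsi.
  apply (Rmult_le_reg_l t); [lra |].
  replace (t * (P * d + 2 * P * k * d * s)) with (P * s * (1 + 2 * k * s))
    by (unfold t; field; lra).
  nra.
Qed.

Definition maximizes_pseudo_utility (L b w : R) (g : R -> R) (y : R) : Prop :=
  0 <= y <= b /\ forall z, 0 <= z <= b ->
    g z - L * z - Psi (w + z) <= g y - L * y - Psi (w + y).

Lemma max_pseudo_utility_slope (L U D b w y : R) (g : R -> R) :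
  assumptionA_item L U (D, g) -> b <= D -> (b < D -> U - L <= psi (w + b)) ->
  maximizes_pseudo_utility L b w g y ->
  forall z, 0 <= z <= D -> g z - L * z - psi (w + y) * z <= g y - L * y - psi (w + y) * y.
Proof.
  intros [_ [_ [_ [hconc hder]]]] hb hcap [hy hmax] z hz.
  pose proof (concave_on_sub_linear D L g hconc) as hh.
  destruct (Rtotal_order z y) as [hzy | [-> | hzy]].
  - exact (max_pseudo_utility_left D b w y z _ hh ltac:(lra) ltac:(lra) hb hmax).
  - lra.
  - destruct (Rlt_or_le y b) as [hyb | hyb].
    + exact (max_pseudo_utility_right D b w y z _ hh ltac:(lra) ltac:(lra) hb hmax).
    + (* at the capacity bound the slope of [g] is at most [U], and [psi (w + b) >= U - L] *)
      assert (y = b) by lra. subst y.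
      destruct (hder b ltac:(lra)) as [l [hl hlU]].
      pose proof (concave_le_tangent D b l z g hconc ltac:(lra) hz hl).
      specialize (hcap ltac:(lra)).
      nra.
Qed.

End PseudoUtility.

Definition continuous_within (D : R) (g : R -> R) (x : R) : Prop :=
  forall eps, 0 < eps -> exists delta, 0 < delta /\
    forall y, 0 <= y <= D -> Rabs (y - x) < delta -> Rabs (g y - g x) < eps.

Lemma deriv_within_continuous_within (D x l : R) (g : R -> R) :
  deriv_within g 0 D x l -> continuous_within D g x.
Proof.
  intros hder eps heps.
  destruct (hder 1 Rlt_0_1) as [delta [hdelta hclose]].
  set (M := Rabs l + 1).
  assert (hM : 0 < M) by (unfold M; pose proof (Rabs_pos l); lra).
  exists (Rmin delta (eps / M)). split.
  { apply Rmin_glb_lt; [lra | now apply Rdiv_lt_0_compat]. }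
  intros y hy hyx.
  pose proof (Rmin_l delta (eps / M)). pose proof (Rmin_r delta (eps / M)).
  destruct (Req_dec y x) as [-> | hne].
  { rewrite Rminus_diag, Rabs_R0. lra. }
  specialize (hclose y hy hne ltac:(lra)).
  set (Q := (g y - g x) / (y - x)) in hclose.
  assert (hQ : Rabs Q <= M).
  { unfold M. replace Q with (Q - l + l) by ring.
    eapply Rle_trans; [apply Rabs_triang | lra]. }
  replace (g y - g x) with (Q * (y - x)) by (unfold Q; field; lra).
  rewrite Rabs_mult.
  apply (Rle_lt_trans _ (M * Rabs (y - x))).
  - apply Rmult_le_compat_r; [apply Rabs_pos | assumption].
  - apply (Rlt_le_trans _ (M * (eps / M))); [apply Rmult_lt_compat_l; lra |].
    right. field. lra.
Qed.

(* Clamping to [[0, b]] turns continuity within [[0, b]] into continuity on all of [R],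
   which is what [continuity_ab_maj] asks for. *)
Definition clamp (b x : R) : R := Rmax 0 (Rmin b x).

Lemma clamp_range (b x : R) : 0 <= b -> 0 <= clamp b x <= b.
Proof. intros. unfold clamp, Rmax, Rmin. repeat destruct Rle_dec; lra. Qed.

Lemma clamp_id (b x : R) : 0 <= x <= b -> clamp b x = x.
Proof. intros. unfold clamp, Rmax, Rmin. repeat destruct Rle_dec; lra. Qed.

Lemma clamp_dist (b x y : R) : 0 <= b -> Rabs (clamp b x - clamp b y) <= Rabs (x - y).
Proof.
  intros. unfold clamp, Rmax, Rmin.
  repeat destruct Rle_dec; unfold Rabs; repeat destruct Rcase_abs; lra.
Qed.

Lemma continuity_clamp (b : R) : 0 <= b -> continuity (clamp b).
Proof.
  intros hb c eps heps. exists eps. split; [assumption |].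
  intros x [_ hx]. simpl in *. unfold R_dist in *.
  eapply Rle_lt_trans; [apply clamp_dist |]; assumption.
Qed.

Lemma continuity_pt_comp_clamp (D b c : R) (g : R -> R) :
  0 <= b <= D -> 0 <= c <= b -> continuous_within D g c ->
  continuity_pt (fun x => g (clamp b x)) c.
Proof.
  intros hb hc hg eps heps.
  destruct (hg eps heps) as [delta [hdelta hclose]].
  exists delta. split; [assumption |].
  intros x [_ hx]. simpl in *. unfold R_dist in *.
  pose proof (clamp_dist b x c ltac:(lra)) as hdist.
  pose proof (clamp_range b x ltac:(lra)).
  rewrite (clamp_id b c hc) in *.
  apply hclose; lra.
Qed.

Lemma exists_pseudo_utility_max (K k L U D b w : R) (g : R -> R) :
  assumptionA_item L U (D, g) -> 0 <= b <= D ->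
  exists y, maximizes_pseudo_utility K k L b w g y.
Proof.
  intros [_ [_ [_ [_ hder]]]] hb.
  set (phi := fun u => L * u + Psi K k (w + u)).
  set (G := fun x => g (clamp b x) - phi (clamp b x)).
  assert (hG : forall c, 0 <= c <= b -> continuity_pt G c).
  { intros c hc. apply continuity_pt_minus.
    - destruct (hder c ltac:(lra)) as [l [hl _]].
      exact (continuity_pt_comp_clamp D b c g hb hc
               (deriv_within_continuous_within D c l g hl)).
    - apply (continuity_pt_comp (clamp b) phi); [now apply continuity_clamp |].
      unfold phi, Psi. reg. }
  destruct (continuity_ab_maj G 0 b ltac:(lra) hG) as [y [hmax hy]].
  exists y. split; [assumption |]. intros z hz.
  specialize (hmax z hz). unfold G, phi in hmax.
  rewrite !clamp_id in hmax by lra. lra.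
Qed.

Definition excess (L : R) (I : instance) (ys : list R) : R :=
  Rsum (map (fun p : item * R => snd (fst p) (snd p) - L * snd p) (combine I ys)).

Definition box_feasible (I : instance) (ys : list R) : Prop :=
  Forall2 (fun (it : item) yn => 0 <= yn <= fst it) I ys.

Lemma payoff_excess (C L : R) (I : instance) (ys : list R) :
  length I = length ys -> payoff C L I ys = C * L + excess L I ys.
Proof.
  revert ys. induction I as [| it I IH]; intros [| y ys] hlen; try discriminate.
  - unfold payoff, excess. simpl. ring.
  - injection hlen as hlen. specialize (IH ys hlen).
    unfold payoff, excess in *. simpl. lra.
Qed.

Lemma Rsum_nonneg_box (I : instance) (ys : list R) : box_feasible I ys -> 0 <= Rsum ys.
Proof. induction 1; simpl; lra. Qed.

Section Greedy.

Variables C L U K k : R.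
Hypotheses (hK : 0 < K) (hk : 0 < k) (hcap : U - L <= psi K k C).

Lemma pseudo_utility_max_spec (w D y : R) (g : R -> R) :
  assumptionA_item L U (D, g) -> w <= C ->
  maximizes_pseudo_utility K k L (Rmin D (C - w)) w g y ->
  0 <= y <= D /\ w + y <= C /\
  Psi K k (w + y) - Psi K k w <= g y - L * y /\
  forall z, 0 <= z <= D ->
    g z - L * z - psi K k (w + y) * z <= g y - L * y - (Psi K k (w + y) - Psi K k w).
Proof.
  intros hitem hw hmax.
  pose proof (Rmin_l D (C - w)). pose proof (Rmin_r D (C - w)).
  assert (hbind : Rmin D (C - w) < D -> U - L <= psi K k (w + Rmin D (C - w))).
  { unfold Rmin. destruct Rle_dec; [lra |]. intros _.
    now replace (w + (C - w)) with C by ring. }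
  pose proof (max_pseudo_utility_slope K k hK hk L U D (Rmin D (C - w)) w y g hitem
    ltac:(lra) hbind hmax) as hslope.
  destruct hmax as [hy _].
  pose proof (Psi_diff_le K k hK hk w y) as hPsi.
  assert (hsupport : forall z, 0 <= z <= D ->
    g z - L * z - psi K k (w + y) * z <= g y - L * y - (Psi K k (w + y) - Psi K k w)).
  { intros z hz. specialize (hslope z hz). lra. }
  destruct hitem as [hD [hg0 _]].
  pose proof (hsupport 0 ltac:(lra)) as hgain. rewrite hg0 in hgain.
  repeat split; try lra. assumption.
Qed.

Definition greedy_choice (w : R) (it : item) : R :=
  epsilon (inhabits 0) (maximizes_pseudo_utility K k L (Rmin (fst it) (C - w)) w (snd it)).

Lemma greedy_choice_max (w : R) (it : item) :
  assumptionA_item L U it -> 0 <= w <= C ->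
  maximizes_pseudo_utility K k L (Rmin (fst it) (C - w)) w (snd it) (greedy_choice w it).
Proof.
  destruct it as [D g]. intros hitem hw. unfold greedy_choice. apply epsilon_spec.
  apply (exists_pseudo_utility_max K k L U D); [assumption |].
  destruct hitem as [hD _]. simpl. unfold Rmin. destruct Rle_dec; lra.
Qed.

Fixpoint greedy_decisions (w : R) (I : instance) : list R :=
  match I with
  | [] => []
  | it :: I' => let y := greedy_choice w it in y :: greedy_decisions (w + y) I'
  end.

Definition greedy_alg : online_alg :=
  fun h => nth (pred (length h)) (greedy_decisions 0 h) 0.

Lemma length_greedy_decisions (I : instance) (w : R) :
  length (greedy_decisions w I) = length I.
Proof. revert w. induction I; intros; simpl; auto. Qed.

Lemma greedy_decisions_firstn (I : instance) (w : R) (n : nat) :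
  greedy_decisions w (firstn n I) = firstn n (greedy_decisions w I).
Proof.
  revert w n. induction I as [| it I IH]; intros w [| n]; simpl; auto.
  now rewrite IH.
Qed.

Lemma decisions_greedy_alg (I : instance) :
  decisions greedy_alg I = greedy_decisions 0 I.
Proof.
  unfold decisions, greedy_alg.
  apply nth_ext with (d := 0) (d' := 0).
  { now rewrite length_map, length_seq, length_greedy_decisions. }
  intros n hn. rewrite length_map, length_seq in hn.
  rewrite (nth_indep _ 0 (nth (pred (length (firstn 1 I)))
                            (greedy_decisions 0 (firstn 1 I)) 0))
    by now rewrite length_map, length_seq.
  rewrite map_nth with (d := 0%nat), seq_nth, Nat.add_0_l by assumption.
  rewrite length_firstn, greedy_decisions_firstn, nth_firstn.
  replace (pred (Nat.min (S n) (length I))) with n by lia.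
  destruct (Nat.ltb_spec n (S n)); [reflexivity | lia].
Qed.

Lemma greedy_invariant (I : instance) : assumptionA L U I -> forall w, 0 <= w <= C ->
  let ds := greedy_decisions w I in
  box_feasible I ds /\ w + Rsum ds <= C /\
  Psi K k (w + Rsum ds) - Psi K k w <= excess L I ds /\
  forall ys lam, box_feasible I ys -> psi K k (w + Rsum ds) <= lam ->
    excess L I ys - lam * Rsum ys <= excess L I ds - (Psi K k (w + Rsum ds) - Psi K k w).
Proof.
  induction 1 as [| [D g] I hitem _ IH]; intros w hw ds.
  - unfold ds, excess. simpl. rewrite Rplus_0_r.
    repeat split; [constructor | lra | lra |].
    intros ys lam hys _. inversion hys. simpl. lra.
  - pose proof (greedy_choice_max w (D, g) hitem hw) as hmax.
    simpl in hmax. set (y := greedy_choice w (D, g)) in *.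
    destruct (pseudo_utility_max_spec w D y g hitem ltac:(lra) hmax)
      as [hy [hyC [hgain hslope]]].
    destruct (IH (w + y) ltac:(lra)) as [hbox [hsum [hgain' hopt]]].
    unfold ds. simpl. fold y.
    set (ds' := greedy_decisions (w + y) I) in *.
    replace (w + (y + Rsum ds')) with (w + y + Rsum ds') by ring.
    assert (hexc : forall z zs, excess L ((D, g) :: I) (z :: zs) = g z - L * z + excess L I zs)
      by reflexivity.
    pose proof (Rsum_nonneg_box _ _ hbox).
    repeat split.
    + constructor; [simpl; lra | assumption].
    + lra.
    + rewrite hexc. lra.
    + intros ys lam hys hlam. inversion hys as [| it z I0 zs hz hzs]; subst.
      simpl in hz |- *. rewrite !hexc.
      specialize (hopt zs lam hzs hlam).
      assert (psi K k (w + y) * z <= lam * z).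
      { apply Rmult_le_compat_r; [lra |].
        eapply Rle_trans; [| exact hlam]. apply (psi_le K k hK hk); lra. }
      specialize (hslope z hz). lra.
Qed.

End Greedy.

Lemma upper_bound (C L U alpha : R) :
  0 < C -> 0 < L -> L < U -> 1 < alpha -> exp alpha = (U - L) / ((alpha - 1) * L) ->
  exists A, valid_alg C L U A /\ competitive C L U A alpha.
Proof.
  intros hC hL hLU ha hexp.
  set (K := (alpha - 1) * L). set (k := alpha / C).
  assert (hK : 0 < K) by (unfold K; nra).
  assert (hk : 0 < k) by (unfold k; apply Rdiv_lt_0_compat; lra).
  assert (hcap : U - L <= psi K k C).
  { unfold psi, k. replace (alpha / C * C) with alpha by (field; lra).
    rewrite hexp. unfold K. right. field. nra. }
  pose proof (greedy_invariant C L U K k hK hk hcap) as hinv.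
  exists (greedy_alg C L K k). split.
  - intros I hI. rewrite decisions_greedy_alg.
    destruct (hinv I hI 0 ltac:(lra)) as [hbox [hsum _]].
    repeat split; [apply length_greedy_decisions | assumption | lra].
  - intros I hI ys [hlen [hys hysC]]. rewrite decisions_greedy_alg.
    destruct (hinv I hI 0 ltac:(lra)) as [hbox [_ [hgain hopt]]].
    set (ds := greedy_decisions C L K k 0 I) in *.
    rewrite (payoff_excess C L I ys) by (symmetry; assumption).
    rewrite (payoff_excess C L I ds) by (symmetry; apply length_greedy_decisions).
    rewrite Rplus_0_l, Psi_0, Rminus_0_r in *.
    set (W := Rsum ds) in *.
    specialize (hopt ys (psi K k W) hys (Rle_refl _)).
    assert (psi K k W * Rsum ys <= psi K k W * C)
      by (apply Rmult_le_compat_l; [left; apply psi_pos | ]; lra).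
    assert (hPsi : alpha * Psi K k W = C * psi K k W - C * K).
    { unfold Psi, psi, k. field. lra. }
    assert ((alpha - 1) * Psi K k W <= (alpha - 1) * excess L I ds)
      by (apply Rmult_le_compat_l; lra).
    assert (C * K = alpha * (C * L) - C * L) by (unfold K; ring).
    lra.
Qed.

Theorem corollary2 (C L U : R) (hC : 0 < C) (hL : 0 < L) (hLU : L < U) :
  (exists alpha, 1 < alpha /\ alpha = ln ((U - L) / (alpha * L - L))) /\
  (forall alpha, 1 < alpha -> alpha = ln ((U - L) / (alpha * L - L)) ->
     optimal_ratio C L U alpha).
Proof.
  split.
  - destruct (exists_exp_root L U hL hLU) as [alpha [ha hexp]].
    exists alpha. split; [assumption |].
    now apply (ln_equation_iff L U alpha hL hLU ha).
  - intros alpha ha heq.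
    apply (ln_equation_iff L U alpha hL hLU ha) in heq.
    split.
    + exact (upper_bound C L U alpha hC hL hLU ha heq).
    + intros A r hvalid hcomp.
      exact (lower_bound C L U alpha r A hC hL hLU ha heq hvalid hcomp).
Qed.
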